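(* Let $A\in\mathbb{R}^{m_1\times d_1}$ and $B\in\mathbb{R}^{m_2\times d_2}$ be completely mixable matrices that have been permuted so that each has all row sums equal. Define the matrix $C=A\oplus B$ with $m_1m_2$ rows and $d_1d_2$ columns by $C_{m_2(i-1)+k,\,d_2(j-1)+l}=A_{ij}+B_{kl}$ for $1\leq i\leq m_1$, $1\leq j\leq d_1$, $1\leq k\leq m_2$, $1\leq l\leq d_2$ (i.e. the block matrix obtained by replacing each entry $A_{ij}$ of $A$ by the block $(A_{ij}+B_{kl})_{1\leq k\leq m_2,\,1\leq l\leq d_2}$). Then $C$ is completely mixable.
   Context: For $A\in\mathbb{R}^{m\times d}$ and $\Pi=(\pi_1,\dots,\pi_d)\in\mathfrak{S}(m)^d$ (where $\mathfrak{S}(m)$ is the symmetric group on $\{1,\dots,m\}$), $A^\Pi$ denotes the matrix with $A^\Pi_{i,j}=A_{\pi_j^{-1}(i),j}$. Define $\gamma(A)=\min_{\Pi}\max_{i}\sum_{j=1}^d A^\Pi_{i,j}$ and $\beta(A)=\max_{\Pi}\min_{i}\sum_{j=1}^d A^\Pi_{i,j}$. The matrix $A$ is called completely mixable if $\gamma(A)=\beta(A)$, i.e. if the entries within each column can be permuted so that all row sums are equal. *)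

From mathcomp Require Import all_boot all_order all_fingroup all_algebra.
Set Implicit Arguments. Unset Strict Implicit. Unset Printing Implicit Defensive.
Import Order.TTheory GRing.Theory Num.Theory.
Local Open Scope ring_scope.

Definition mix (R : Type) (m d : nat) (A : 'M[R]_(m, d)) (P : 'I_d -> 'S_m)
  : 'M[R]_(m, d) := \matrix_(i < m, j < d) A ((P j)^-1%g i) j.

Definition equal_row_sums (R : nmodType) (m d : nat) (M : 'M[R]_(m, d)) : Prop :=
  forall i i' : 'I_m, \sum_(j < d) M i j = \sum_(j < d) M i' j.

Definition completely_mixable (R : nmodType) (m d : nat) (A : 'M[R]_(m, d)) : Prop :=
  exists P : {ffun 'I_d -> 'S_m}, equal_row_sums (mix A P).

(* 0-based index i*n + j in 'I_(m*n), i.e. the 1-based n(i-1)+j *)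
Lemma pair_idx_subproof (m n : nat) (i : 'I_m) (j : 'I_n) : (i * n + j < m * n)%N.
Proof.
have hi := ltn_ord i; have hj := ltn_ord j.
apply: (@leq_trans (i * n + n)); first by rewrite ltn_add2l.
by rewrite -mulSnr leq_mul2r hi orbT.
Qed.

Definition pair_idx (m n : nat) (i : 'I_m) (j : 'I_n) : 'I_(m * n) :=
  Ordinal (pair_idx_subproof i j).

From mathcomp Require Import all_boot all_order all_fingroup all_algebra.
Set Implicit Arguments. Unset Strict Implicit. Unset Printing Implicit Defensive.
Import Order.TTheory GRing.Theory Num.Theory.
Local Open Scope ring_scope.

Lemma mix1 (R : Type) (m d : nat) (A : 'M[R]_(m, d)) :
  mix A [ffun=> 1%g] = A.
Proof. by apply/matrixP => i j; rewrite mxE ffunE invg1 perm1. Qed.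

Lemma equal_row_sums_mixable (R : nmodType) (m d : nat) (A : 'M[R]_(m, d)) :
  equal_row_sums A -> completely_mixable A.
Proof. by exists [ffun=> 1%g]; rewrite mix1. Qed.

Lemma pair_idx_inj (m n : nat) :
  injective (fun p : 'I_m * 'I_n => pair_idx p.1 p.2).
Proof.
move=> [i k] [i' k'] /= /(congr1 val) /= E.
have n_gt0 : (0 < n)%N by apply: leq_ltn_trans (ltn_ord k).
have := congr1 (divn^~ n) E; rewrite !divnMDl // !divn_small // !addn0 => Ei.
have := congr1 (modn^~ n) E; rewrite !modnMDl !modn_small // => Ek.
by congr pair; apply: val_inj.
Qed.

Lemma pair_idx_bij (m n : nat) :
  bijective (fun p : 'I_m * 'I_n => pair_idx p.1 p.2).
Proof. by apply: inj_card_bij; [exact: pair_idx_inj | rewrite card_prod !card_ord]. Qed.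

Lemma pair_idxP (m n : nat) (x : 'I_(m * n)) :
  exists (i : 'I_m) (k : 'I_n), x = pair_idx i k.
Proof.
have [g _ gK] := pair_idx_bij m n.
by exists (g x).1, (g x).2; rewrite gK.
Qed.

Lemma sum_pair_idx (R : nmodType) (m n : nat) (F : 'I_(m * n) -> R) :
  \sum_(x < m * n) F x = \sum_(i < m) \sum_(k < n) F (pair_idx i k).
Proof.
have [g fg gf] := pair_idx_bij m n.
rewrite pair_big (reindex (fun p : 'I_m * 'I_n => pair_idx p.1 p.2)) //.
by exists g => x _; [apply: fg | apply: gf].
Qed.

Section BlockSum.

Variables (R : nmodType) (m1 d1 m2 d2 : nat).
Variables (A : 'M[R]_(m1, d1)) (B : 'M[R]_(m2, d2)) (C : 'M[R]_(m1 * m2, d1 * d2)).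
Hypothesis C_block : forall (i : 'I_m1) (j : 'I_d1) (k : 'I_m2) (l : 'I_d2),
  C (pair_idx i k) (pair_idx j l) = A i j + B k l.

Lemma row_sum_block (i : 'I_m1) (k : 'I_m2) :
  \sum_(x < d1 * d2) C (pair_idx i k) x
    = (\sum_(j < d1) A i j) *+ d2 + (\sum_(l < d2) B k l) *+ d1.
Proof.
rewrite sum_pair_idx.
under eq_bigr => j _ do
  under eq_bigr => l _ do rewrite (C_block i j k l).
under eq_bigr => j _ do rewrite big_split /= sumr_const card_ord.
by rewrite big_split /= sumr_const card_ord sumrMnl.
Qed.

Lemma equal_row_sums_block :
  equal_row_sums A -> equal_row_sums B -> equal_row_sums C.
Proof.
move=> eqA eqB r r'.
case: (pair_idxP r) => i [k ->]; case: (pair_idxP r') => i' [k' ->].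
by rewrite !row_sum_block (eqA i i') (eqB k k').
Qed.

End BlockSum.

Theorem proposition1 (R : realFieldType) (m1 d1 m2 d2 : nat)
  (A : 'M[R]_(m1, d1)) (B : 'M[R]_(m2, d2)) (C : 'M[R]_(m1 * m2, d1 * d2)) :
  completely_mixable A -> completely_mixable B ->
  equal_row_sums A -> equal_row_sums B ->
  (forall (i : 'I_m1) (j : 'I_d1) (k : 'I_m2) (l : 'I_d2),
      C (pair_idx i k) (pair_idx j l) = A i j + B k l) ->
  completely_mixable C.
Proof.
move=> _ _ eqA eqB C_block.
exact/equal_row_sums_mixable/(equal_row_sums_block C_block eqA eqB).
Qed.
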